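(* Let $\star\in\{T,L,R\}$ and suppose that a pair $(\mathfrak m,\mathfrak m^* )$ of complex-valued functions on the edges of the subgraph $S^\star$ is ICSH and has ICRBV (in $S^\star$). Then $$\int_{\gamma^\star_y}\big(\mathfrak m(z)\hat\psi(z)\,dz+\mathfrak m^*(z)\hat\psi^*(z)\,d\bar z\big)=\int_{\gamma^\star_0}\big(\mathfrak m(z)\hat\psi(z)\,dz+\mathfrak m^*(z)\hat\psi^*(z)\,d\bar z\big)$$ for every $y\in\mathbb Z_{\ge0}$ if $\star=T$, and for every $y\in\mathbb Z_{\le0}$ if $\star\in\{L,R\}$.
   Context: Fix integers $a<0<b$, $C=\{a,\dots,b\}$, $C^*=\{a+\frac12,\dots,b-\frac12\}$. $\tilde V$ has orthonormal basis $(e_\rho)_{\rho\in\{\pm1\}^C}$; for $x'\in C^*$, $\varsigma_{x'}(\rho)$ flips signs of $\rho_x$, $x<x'$; $\psi_{x'}e_\rho=\frac{-\rho_{x'-1/2}+i\rho_{x'+1/2}}{\sqrt2}e_{\varsigma_{x'}(\rho)}$, $\psi^*_{x'}e_\rho=\frac{-i\rho_{x'-1/2}+\rho_{x'+1/2}}{\sqrt2}e_{\varsigma_{x'}(\rho)}$; $\mathrm{CliffGen}$ is their span. With $\beta=\frac12\log(\sqrt2+1)$: $T_h^{1/2}$ diagonal with entries $\exp(\frac\beta2\sum_{x=a}^{b-1}\rho_x\rho_{x+1})$; $e_\tau^\dagger T_ve_\rho=\exp(\beta\sum_x\rho_x\tau_x)\delta_{\tau_a\rho_a}\delta_{\tau_b\rho_b}$;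 $e_\tau^\dagger T^{slit}_ve_\rho=\exp(\beta\sum_x\rho_x\tau_x)\delta_{\tau_a\rho_a}\delta_{\tau_0\rho_0}\delta_{\tau_b\rho_b}$; $T=T_h^{1/2}T_vT_h^{1/2}$, $T^{slit}=T_h^{1/2}T^{slit}_vT_h^{1/2}$. The lattice slit-strip is the multigraph with vertices $C\times\mathbb Z\subset\mathbb C$, nearest-neighbour edges (identified with midpoints), with each edge between $-iy$ and $-i(y+1)$ ($y\ge0$) doubled into a left-side ($0^-$) and right-side ($0^+$) copy; faces adjacent to the slit use the copy on their side. Its subgraphs are $S^T=\{a,\dots,b\}\times\mathbb Z_{\ge0}$, $S^L=\{a,\dots,0\}\times\mathbb Z_{\le0}$, $S^R=\{0,\dots,b\}\times\mathbb Z_{\le0}$ with the corresponding edges of the slit-strip. Left boundary edges: vertical edges on $x=a$ and right-side slit edges; right boundary edges: vertical edges on $x=b$ and left-side slit edges. The fermions $\hat\psi,\hat\psi^*$ are the unique functions from the edges of the slit-strip to $\mathrm{CliffGen}$ with $\hat\psi(x'+iy)=T^{-y}\psi_{x'}T^y$, $\hat\psi^*(x'+iy)=T^{-y}\psi^*_{x'}T^y$, $\hat\psi(x'-iy)=(T^{slit})^y\psi_{x'}(T^{slit})^{-y}$, $\hat\psi^*(x'-iy)=(T^{slit})^y\psi^*_{x'}(T^{slit})^{-y}$ ($y\ge0$) on horizontal edges and satisfying: for edges $z_1,z_2$ adjacent to a common vertex $v$ and face $p$, $\hat\psi(z_1)+\frac{i|v-p|}{v-p}\hat\psi^*(z_1)=\hat\psi(z_2)+\frac{i|v-p|}{v-p}\hat\psi^*(z_2)$;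 $\hat\psi(L)+i\hat\psi^*(L)=0$ and $\hat\psi(R)-i\hat\psi^*(R)=0$ on left/right boundary edges. Contours: $\gamma^T_y=(a+iy,\dots,b+iy)$ ($y\ge0$), $\gamma^L_y=(a+iy,\dots,0+iy)$, $\gamma^R_y=(0+iy,\dots,b+iy)$ ($y\le0$); integrals: $\int(\mathfrak m\hat\psi\,dz+\mathfrak m^*\hat\psi^*\,d\bar z)=\sum_j(\mathfrak m(z_j)\hat\psi(z_j)(w_j-w_{j-1})+\mathfrak m^*(z_j)\hat\psi^*(z_j)\overline{(w_j-w_{j-1})})$ over consecutive vertices $w_{j-1},w_j$ with joining edge $z_j$. ICSH in $S^\star$: for edges $z_1,z_2$ of $S^\star$ adjacent to a common vertex $v$ and face $p$ of $S^\star$, $\mathfrak m(z_1)-\frac{i|v-p|}{v-p}\mathfrak m^*(z_1)=\mathfrak m(z_2)-\frac{i|v-p|}{v-p}\mathfrak m^*(z_2)$. ICRBV in $S^\star$: $\mathfrak m(L)-i\mathfrak m^*(L)=0$ and $\mathfrak m(R)+i\mathfrak m^*(R)=0$ for all left/right boundary edges $L,R$ of $S^\star$ (for $S^L$ the right boundary is the left side of the slit, for $S^R$ the left boundary is the right side of the slit). *)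

From HB Require Import structures.
From mathcomp Require Import all_boot all_order all_algebra.
From mathcomp Require Import all_classical all_reals all_analysis.
From mathcomp.real_closed Require Import complex.
Set Implicit Arguments. Unset Strict Implicit. Unset Printing Implicit Defensive.
Import Order.TTheory GRing.Theory Num.Theory.
Local Open Scope ring_scope.
Local Open Scope complex_scope.

(* Edges of the lattice slit-strip (vertices C x Z, C = {a,...,b}).          *)
(*  EH x y      : horizontal edge between x+iy and (x+1)+iy (a <= x < b);    *)
(*                its midpoint is x' + iy with x' = x + 1/2 in C^*.          *)
(*  EV x y      : vertical edge between x+iy and x+i(y+1) (a <= x <= b),     *)
(*                not used for x = 0, y < 0 (the slit).                      *)
(*  ESl s y     : slit edge between 0+iy and 0+i(y+1), y < 0 (i.e. between   *)
(*                -iy' and -i(y'+1) with y' = -y-1 >= 0); s = false is the   *)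
(*                left-side copy 0^-, s = true the right-side copy 0^+.      *)
Inductive edge : Type :=
| EH of int & int
| EV of int & int
| ESl of bool & int.

Inductive star : Type := ST | SL | SR.

Section SlitStrip.
Variable R : realType.
Variables a b : int.

(* number of sites of C minus one; sites are a + k, k < nC.+1 *)
Definition nC : nat := `|b - a|%N.

(* spin configurations rho in {+-1}^C, encoded as booleans (true = +1) *)
Definition Spin : finType := {ffun 'I_nC.+1 -> bool}.

Definition spin (rho : Spin) (x : int) : R :=
  if (a <= x <= b) then (if rho (inord `|x - a|) then 1 else -1) else 0.

Definition spinC (rho : Spin) (x : int) : R[i] := (spin rho x)%:C.

(* varsigma_{x'} for x' = k + 1/2 : flips rho_x for all x < x', i.e. x <= k *)
Definition flip (k : int) (rho : Spin) : Spin :=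
  [ffun i : 'I_nC.+1 => if a + (i : nat)%:Z <= k then ~~ rho i else rho i].

(* operators on tilde V, as matrices in the orthonormal basis (e_rho);
   the (tau, rho) entry is e_tau^dagger A e_rho *)
Definition Dim : nat := #|{: Spin}|.
Definition Mat := 'M[R[i]]_Dim.

Definition mk_op (F : Spin -> Spin -> R[i]) : Mat :=
  \matrix_(i < Dim, j < Dim) F (enum_val i) (enum_val j).

Definition sqrt2C : R[i] := (Num.sqrt (2 : R))%:C.

(* psi_{x'} and psi^*_{x'} for x' = k + 1/2 *)
Definition psi (k : int) : Mat :=
  mk_op (fun tau rho => if tau == flip k rho
           then (- spinC rho k + 'i * spinC rho (k + 1)) / sqrt2C else 0).

Definition psis (k : int) : Mat :=
  mk_op (fun tau rho => if tau == flip k rho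
           then (- 'i * spinC rho k + spinC rho (k + 1)) / sqrt2C else 0).

Definition in_CliffGen (A : Mat) : Prop :=
  exists c d : 'I_nC -> R[i],
    A = \sum_(k < nC) (c k *: psi (a + (k : nat)%:Z) + d k *: psis (a + (k : nat)%:Z)).

Definition beta : R := ln (Num.sqrt 2 + 1) / 2.

Definition Th_half : Mat :=
  mk_op (fun tau rho => if tau == rho then
     (expR (beta / 2 * \sum_(k < nC) spin rho (a + (k : nat)%:Z) * spin rho (a + (k : nat)%:Z + 1)))%:C
     else 0).

Definition Tv : Mat :=
  mk_op (fun tau rho =>
     if (spin tau a == spin rho a) && (spin tau b == spin rho b) then
       (expR (beta * \sum_(k < nC.+1) spin rho (a + (k : nat)%:Z) * spin tau (a + (k : nat)%:Z)))%:C
     else 0).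

Definition Tv_slit : Mat :=
  mk_op (fun tau rho =>
     if [&& spin tau a == spin rho a, spin tau 0 == spin rho 0 & spin tau b == spin rho b] then
       (expR (beta * \sum_(k < nC.+1) spin rho (a + (k : nat)%:Z) * spin tau (a + (k : nat)%:Z)))%:C
     else 0).

Definition Ttr : Mat := Th_half *m Tv *m Th_half.
Definition Ttr_slit : Mat := Th_half *m Tv_slit *m Th_half.

Definition cpt (x y : R) : R[i] := x +i* y.
Definition vtx (v : int * int) : R[i] := cpt (v.1)%:~R (v.2)%:~R.

Definition valid_edge (z : edge) : bool :=
  match z with
  | EH x y => (a <= x) && (x < b)
  | EV x y => (a <= x <= b) && ~~ ((x == 0) && (y < 0))
  | ESl _ y => y < 0
  end.

(* faces: unit squares with lower-left corner x+iy, a <= x < b.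
   The vertical side of the face (x,y) on the left (right = false) or on the
   right (right = true); faces adjacent to the slit use the copy on their side *)
Definition face_vedge (x y : int) (right : bool) : edge :=
  let xe := if right then x + 1 else x in
  if (xe == 0) && (y < 0) then ESl (~~ right) y else EV xe y.

Definition face_hedge (x y : int) (top : bool) : edge := EH x (y + top%:Z).

Definition cfac (x y : int) (dx dy : bool) : R[i] :=
  let v := vtx (x + dx%:Z, y + dy%:Z) in
  let p := cpt (x%:~R + 1 / 2) (y%:~R + 1 / 2) in
  'i * `|v - p| / (v - p).

Definition hor_value (P : int -> Mat) (x y : int) : Mat :=
  if 0 <= y then (invmx Ttr) ^+ `|y| *m P x *m Ttr ^+ `|y|
  else Ttr_slit ^+ `|y| *m P x *m (invmx Ttr_slit) ^+ `|y|.

Definition is_fermion_pair (Psi Psis : edge -> Mat) : Prop :=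
  [/\ (forall z, valid_edge z -> in_CliffGen (Psi z) /\ in_CliffGen (Psis z)),
      (forall x y, a <= x < b ->
         Psi (EH x y) = hor_value psi x y /\ Psis (EH x y) = hor_value psis x y),
      (forall x y (dx dy : bool), a <= x < b ->
         let z1 := face_hedge x y dy in
         let z2 := face_vedge x y dx in
         let c := cfac x y dx dy in
         Psi z1 + c *: Psis z1 = Psi z2 + c *: Psis z2),
      (* left boundary edges: vertical edges on x = a, right-side slit edges *)
      (forall y, Psi (EV a y) + 'i *: Psis (EV a y) = 0) /\
      (forall y, y < 0 -> Psi (ESl true y) + 'i *: Psis (ESl true y) = 0) &
      (* right boundary edges: vertical edges on x = b, left-side slit edges *)
      (forall y, Psi (EV b y) - 'i *: Psis (EV b y) = 0) /\
      (forall y, y < 0 -> Psi (ESl false y) - 'i *: Psis (ESl false y) = 0)].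

Definition inS (st : star) (z : edge) : bool :=
  match st, z with
  | ST, EH x y => (a <= x < b) && (0 <= y)
  | ST, EV x y => (a <= x <= b) && (0 <= y)
  | ST, ESl _ _ => false
  | SL, EH x y => (a <= x < 0) && (y <= 0)
  | SL, EV x y => (a <= x < 0) && (y < 0)
  | SL, ESl s y => ~~ s && (y < 0)
  | SR, EH x y => (0 <= x < b) && (y <= 0)
  | SR, EV x y => (0 < x <= b) && (y < 0)
  | SR, ESl s y => s && (y < 0)
  end.

Definition faceS (st : star) (x y : int) : bool :=
  match st with
  | ST => (a <= x < b) && (0 <= y)
  | SL => (a <= x < 0) && (y < 0)
  | SR => (0 <= x < b) && (y < 0)
  end.

Definition left_bdry (st : star) (z : edge) : bool :=
  match st, z with
  | ST, EV x y => (x == a) && (0 <= y)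
  | SL, EV x y => (x == a) && (y < 0)
  | SR, ESl s y => s && (y < 0)
  | _, _ => false
  end.

Definition right_bdry (st : star) (z : edge) : bool :=
  match st, z with
  | ST, EV x y => (x == b) && (0 <= y)
  | SL, ESl s y => ~~ s && (y < 0)
  | SR, EV x y => (x == b) && (y < 0)
  | _, _ => false
  end.

Definition ICSH (st : star) (m ms : edge -> R[i]) : Prop :=
  forall x y (dx dy : bool), faceS st x y ->
    let z1 := face_hedge x y dy in
    let z2 := face_vedge x y dx in
    let c := cfac x y dx dy in
    inS st z1 -> inS st z2 ->
    m z1 - c * ms z1 = m z2 - c * ms z2.

Definition ICRBV (st : star) (m ms : edge -> R[i]) : Prop :=
  (forall z, left_bdry st z -> m z - 'i * ms z = 0) /\
  (forall z, right_bdry st z -> m z + 'i * ms z = 0).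

(* a contour: list of (joining edge z_j, vertex w_{j-1}, vertex w_j) *)
Definition contour_integral (m ms : edge -> R[i]) (Psi Psis : edge -> Mat)
    (g : seq (edge * (int * int) * (int * int))) : Mat :=
  \sum_(t <- g)
    let: (z, w0, w1) := t in
    ((m z * (vtx w1 - vtx w0)) *: Psi z + (ms z * (vtx w1 - vtx w0)^*) *: Psis z).

Definition hcontour (x0 x1 y : int) : seq (edge * (int * int) * (int * int)) :=
  [seq (EH (x0 + (k : nat)%:Z) y, (x0 + (k : nat)%:Z, y), (x0 + (k : nat)%:Z + 1, y))
  | k <- iota 0 `|x1 - x0|].

Definition gamma (st : star) (y : int) :=
  match st with
  | ST => hcontour a b y
  | SL => hcontour a 0 y
  | SR => hcontour 0 b y
  end.

Definition y_range (st : star) (y : int) : bool :=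
  match st with
  | ST => 0 <= y
  | SL | SR => y <= 0
  end.

End SlitStrip.

From HB Require Import structures.
From mathcomp Require Import all_boot all_order all_algebra.
From mathcomp Require Import all_classical all_reals all_analysis.
From mathcomp.real_closed Require Import complex.
From mathcomp Require Import ring zify.
Set Implicit Arguments. Unset Strict Implicit. Unset Printing Implicit Defensive.
Import Order.TTheory GRing.Theory Num.Theory.
Local Open Scope ring_scope.

(* A discrete Stokes argument.  At the corner of a face with factor c, the
   quantities m - c m^* and psi + c psi^* agree on the two sides of the face
   meeting there (ICSH, resp. the local relations of the fermions).  The term
   m psi dz + m^* psi^* d(conj z) of a side splits into contributions of its
   two endpoints, each a weight times the product of these two corner
   quantities, and at every corner the weights of the two sides cancel: the
   circulation around each face vanishes.  Summing over a row of faces, the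
   inner vertical sides cancel in pairs and the two outer ones vanish by the
   boundary conditions, so the integral along gamma_y does not change when y
   moves by one. *)

Section CornerFactors.
Variable R : realType.

Definition sqrt_i : R[i] := (Num.sqrt (2^-1 : R))%:C%C * (1 + 'i).

Lemma sqrt_i_sqr : sqrt_i ^+ 2 = 'i.
Proof.
rewrite /sqrt_i exprMn -rmorphXn /= sqr_sqrtr ?invr_ge0 // fmorphV rmorph_nat.
by field: (sqrCi R[i]).
Qed.

Lemma sqrt_i_neq0 : sqrt_i != 0.
Proof. by have := expf_eq0 sqrt_i 2; rewrite sqrt_i_sqr /= => <-; exact: neq0Ci. Qed.

Definition corner_factor (dx dy : bool) : R[i] :=
  if dx then (if dy then sqrt_i else 'i * sqrt_i)
  else (if dy then - ('i * sqrt_i) else - sqrt_i).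

Lemma cfac_corner_factor (x y : int) (dx dy : bool) :
  cfac R x y dx dy = corner_factor dx dy.
Proof.
have offset (z : int) (d : bool) :
    (z + d%:Z)%:~R - (z%:~R + 1 / 2) = d%:R - 2^-1 :> R.
  by rewrite intrD; case: d => /=; field.
rewrite /cfac /vtx /cpt /= -[(_ +i* _)%C - (_ +i* _)%C]/(_ +i* _)%C !offset.
set D := ((dx%:R - 2^-1) +i* (dy%:R - 2^-1))%C.
have normD : `|D| = (Num.sqrt (2^-1 : R))%:C%C.
  rewrite normc_def /=; congr (Num.sqrt _)%:C%C.
  by case: (dx) (dy) => -[] /=; field.
have D_neq0 : D != 0.
  rewrite -normr_eq0 normD -(rmorph0 (real_complex R)) (inj_eq (@complexI _)).
  by rewrite sqrtr_eq0 -ltNge invr_gt0 ltr0n.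
rewrite normD; apply: (mulIf D_neq0); rewrite divfK // [D]complexE /= complexiE.
case: dx dy {D normD D_neq0} => -[];
  rewrite /= /sqrt_i !(rmorphB, rmorph1, rmorph0, fmorphV, rmorph_nat).
all: by field: (sqrCi R[i]).
Qed.

Lemma corner_factors_horizontal_conj (dy : bool) :
  1^* = corner_factor false dy * corner_factor true dy * 1.
Proof. by rewrite conjC1; case: dy => /=; ring: sqrt_i_sqr (sqrCi R[i]). Qed.

Lemma corner_factors_vertical_conj (dx : bool) :
  'i^* = corner_factor dx false * corner_factor dx true * 'i.
Proof. by rewrite conjCi; case: dx => /=; ring: sqrt_i_sqr (sqrCi R[i]). Qed.

Lemma one_plus_i_neq0 : 1 + 'i != 0 :> R[i].
Proof. by rewrite -complexiE eq_complex /= addr0 oner_eq0. Qed.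

Lemma one_minus_i_neq0 : 1 - 'i != 0 :> R[i].
Proof. by rewrite -complexiE eq_complex /= oppr0 addr0 oner_eq0. Qed.

Lemma corner_factors_horizontal_neq (dy : bool) :
  corner_factor false dy != corner_factor true dy.
Proof.
rewrite eq_sym -subr_eq0; case: dy => /=.
  have -> : sqrt_i - - ('i * sqrt_i) = (1 + 'i) * sqrt_i by ring.
  by rewrite mulf_neq0 ?one_plus_i_neq0 ?sqrt_i_neq0.
have -> : 'i * sqrt_i - - sqrt_i = (1 + 'i) * sqrt_i by ring.
by rewrite mulf_neq0 ?one_plus_i_neq0 ?sqrt_i_neq0.
Qed.

Lemma corner_factors_vertical_neq (dx : bool) :
  corner_factor dx false != corner_factor dx true.
Proof.
rewrite -subr_eq0; case: dx => /=.
  have -> : 'i * sqrt_i - sqrt_i = - (1 - 'i) * sqrt_i by ring.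
  by rewrite mulf_neq0 ?oppr_eq0 ?one_minus_i_neq0 ?sqrt_i_neq0.
have -> : - sqrt_i - - ('i * sqrt_i) = - (1 - 'i) * sqrt_i by ring.
by rewrite mulf_neq0 ?oppr_eq0 ?one_minus_i_neq0 ?sqrt_i_neq0.
Qed.

Definition corner_weight (d c c' : R[i]) : R[i] := d * c' / (c' - c).

Lemma corner_weights_balance :
  let c := corner_factor in
  [/\ corner_weight 1 (c false false) (c true false) =
        corner_weight 'i (c false false) (c false true),
      corner_weight 'i (c true false) (c true true) =
        - corner_weight 1 (c true false) (c false false),
      corner_weight 'i (c true true) (c true false) =
        corner_weight 1 (c true true) (c false true) &
      corner_weight 'i (c false true) (c false false) =
        - corner_weight 1 (c false true) (c true true)].
Proof.
have sub_neq0 (u v : R[i]) : u != v -> (u - v != 0) && (v - u != 0).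
  by move=> uv; rewrite !subr_eq0 uv eq_sym uv.
move/sub_neq0/andP: (corner_factors_horizontal_neq false) => [h0 h0'].
move/sub_neq0/andP: (corner_factors_horizontal_neq true) => [h1 h1'].
move/sub_neq0/andP: (corner_factors_vertical_neq false) => [v0 v0'].
move/sub_neq0/andP: (corner_factors_vertical_neq true) => [v1 v1'].
rewrite /corner_weight /corner_factor /= in h0 h0' h1 h1' v0 v0' v1 v1' *.
by split; field: sqrt_i_sqr (sqrCi R[i]); rewrite ?(h0, h0', h1, h1', v0, v0', v1, v1').
Qed.

End CornerFactors.

Section EdgeTerms.
Variables (R : realType) (n : nat).
Variables (m ms : edge -> R[i]) (Psi Psis : edge -> 'M[R[i]]_n).

Definition edge_term (d : R[i]) (z : edge) : 'M[R[i]]_n :=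
  (m z * d) *: Psi z + (ms z * d^*) *: Psis z.

Definition m_at (c : R[i]) (z : edge) : R[i] := m z - c * ms z.
Definition Psi_at (c : R[i]) (z : edge) : 'M[R[i]]_n := Psi z + c *: Psis z.

Lemma edge_term_corner_split (z : edge) {c c' d : R[i]} :
  c != c' -> d^* = c * c' * d ->
  edge_term d z = (corner_weight d c c' * m_at c z) *: Psi_at c z
                + (corner_weight d c' c * m_at c' z) *: Psi_at c' z.
Proof.
move=> cc' dJ; have c'c0 : c' - c != 0 by rewrite subr_eq0 eq_sym.
have cc'0 : c - c' != 0 by rewrite subr_eq0.
apply/matrixP => i j; rewrite /edge_term /corner_weight /m_at /Psi_at !mxE dJ.
by field; rewrite c'c0 cc'0.
Qed.

Lemma face_balance (hedge vedge : bool -> edge) :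
  (forall dx dy, let c := corner_factor R dx dy in
     m_at c (hedge dy) = m_at c (vedge dx)) ->
  (forall dx dy, let c := corner_factor R dx dy in
     Psi_at c (hedge dy) = Psi_at c (vedge dx)) ->
  edge_term 1 (hedge false) + edge_term 'i (vedge true) =
  edge_term 1 (hedge true) + edge_term 'i (vedge false).
Proof.
move=> hm hP.
have split_h dy := edge_term_corner_split (hedge dy)
  (corner_factors_horizontal_neq R dy) (corner_factors_horizontal_conj R dy).
have split_v dx := edge_term_corner_split (vedge dx)
  (corner_factors_vertical_neq R dx) (corner_factors_vertical_conj R dx).
rewrite !split_h !split_v -!hm -!hP.
have [w00 w10 w11 w01] := corner_weights_balance R.
rewrite w00 w10 w11 w01 !mulNr !scaleNr.
have cancel (V : zmodType) (A B C D : V) : A + B + (- B + C) = D + C + (A - D).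
  by rewrite -addrA addNKr [RHS]addrC addrA subrK.
exact: cancel.
Qed.

Lemma edge_term_eq0 (c d : R[i]) (z : edge) :
  d^* = c ^+ 2 * d -> m_at c z = 0 -> Psi_at c z = 0 -> edge_term d z = 0.
Proof.
rewrite /m_at /Psi_at => dJ /eqP; rewrite subr_eq0 => /eqP mE.
move=> /eqP; rewrite addr_eq0 => /eqP PsiE.
rewrite /edge_term mE PsiE dJ scalerN scalerA -scaleNr -scalerDl.
by rewrite [X in X *: _](_ : _ = 0) ?scale0r //; ring.
Qed.

End EdgeTerms.

Lemma vtx_step (R : realType) (x y : int) : vtx R (x + 1, y) - vtx R (x, y) = 1.
Proof.
rewrite /vtx /cpt /= -[(_ +i* _)%C - (_ +i* _)%C]/(_ +i* _)%C.
by apply/eqP; rewrite eq_complex /= intrD addrAC subrr add0r subrr !eqxx.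
Qed.

Lemma contour_integral_hcontour (R : realType) (a b : int) (m ms : edge -> R[i])
    (Psi Psis : edge -> Mat R a b) (x0 x1 y : int) :
  contour_integral m ms Psi Psis (hcontour x0 x1 y) =
  \sum_(0 <= k < `|x1 - x0|) edge_term m ms Psi Psis 1 (EH (x0 + k%:Z) y).
Proof.
rewrite /contour_integral /hcontour big_map /index_iota subn0.
by apply: eq_bigr => k _; rewrite vtx_step.
Qed.

Lemma telescope_sumr_adjacent (V : zmodType) (n : nat) (f g : nat -> V) :
  (forall k, (k < n)%N -> g k = f k.+1) ->
  \sum_(0 <= k < n.+1) (f k - g k) = f 0%N - g n.
Proof.
elim: n => [|n IH] gf; first by rewrite big_nat1.
rewrite big_nat_recr //= IH => [|k kn]; last by apply: gf; exact: ltnW.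
by rewrite gf // addrA subrK.
Qed.

Lemma eq_nonneg_from_step (T : Type) (f : int -> T) :
  (forall y, 0 <= y -> f y = f (y + 1)) -> forall y, 0 <= y -> f y = f 0.
Proof.
move=> step [] n // _; elim: n => // n IH.
by rewrite -IH [in RHS]step // -[n.+1]addn1 PoszD.
Qed.

Lemma eq_nonpos_from_step (T : Type) (f : int -> T) :
  (forall y, y < 0 -> f y = f (y + 1)) -> forall y, y <= 0 -> f y = f 0.
Proof.
move=> step y y_le0; rewrite -[y]opprK -[0]oppr0.
apply: (eq_nonneg_from_step (f := fun z => f (- z))); last by rewrite oppr_ge0.
move=> z z_ge0; rewrite [RHS]step; last by lia.
by rewrite opprD addrNK.
Qed.

Section SlitStripGeometry.
Variables (a b : int).

Definition x_lo (st : star) : int := if st is SR then 0 else a.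
Definition x_hi (st : star) : int := if st is SL then 0 else b.
Definition face_row (st : star) (y : int) : bool := if st is ST then 0 <= y else y < 0.

Lemma faceSE st x y : faceS a b st x y = (x_lo st <= x < x_hi st) && face_row st y.
Proof. by case: st. Qed.

Lemma gammaE st y : gamma a b st y = hcontour (x_lo st) (x_hi st) y.
Proof. by case: st. Qed.

Lemma faceS_strip st x y : a < 0 -> 0 < b -> faceS a b st x y -> a <= x < b.
Proof. by case: st => /=; lia. Qed.

Lemma inS_face_hedge st x y (top : bool) :
  faceS a b st x y -> inS a b st (face_hedge x y top).
Proof. by rewrite /face_hedge; case: st top => -[] /=; lia. Qed.

Lemma inS_face_vedge st x y (right : bool) :
  faceS a b st x y -> inS a b st (face_vedge x y right).
Proof. by rewrite /face_vedge; case: st right => -[]; case: ifP => /=; lia. Qed.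

Lemma face_vedge_shared st x y : faceS a b st x y -> faceS a b st (x + 1) y ->
  face_vedge x y true = face_vedge (x + 1) y false.
Proof.
move=> hx hx1; rewrite /face_vedge /=.
have -> // : (x + 1 == 0) && (y < 0) = false.
by case: st hx hx1 => /=; lia.
Qed.

Lemma left_bdry_face_vedge st y : a < 0 -> face_row st y ->
  left_bdry a st (face_vedge (x_lo st) y false).
Proof. by rewrite /face_vedge; case: st => /=; case: ifP => /=; lia. Qed.

Lemma right_bdry_face_vedge st (x y : int) : 0 < b -> face_row st y ->
  x + 1 = x_hi st -> right_bdry b st (face_vedge x y true).
Proof. by rewrite /face_vedge; case: st => /=; case: ifP => /=; lia. Qed.

End SlitStripGeometry.

Section FermionBoundary.
Variables (R : realType) (a b : int) (Psi Psis : edge -> Mat R a b).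
Hypothesis fermion : is_fermion_pair Psi Psis.

Lemma fermion_left_bdry st z : left_bdry a st z -> Psi_at Psi Psis 'i z = 0.
Proof.
case: fermion => _ _ _ [onEV onSl] _.
case: st; case: z => //= p y.
- by case/andP=> /eqP-> _; exact: onEV.
- by case/andP=> /eqP-> _; exact: onEV.
- by case: p => //= /onSl.
Qed.

Lemma fermion_right_bdry st z : right_bdry b st z -> Psi_at Psi Psis (- 'i) z = 0.
Proof.
rewrite /Psi_at scaleNr; case: fermion => _ _ _ _ [onEV onSl].
case: st; case: z => //= p y.
- by case/andP=> /eqP-> _; exact: onEV.
- by case: p => //= /onSl.
- by case/andP=> /eqP-> _; exact: onEV.
Qed.

End FermionBoundary.

Section Circulation.
Variables (R : realType) (a b : int) (Psi Psis : edge -> Mat R a b).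
Variables (st : star) (m ms : edge -> R[i]).
Hypotheses (a_neg : a < 0) (b_pos : 0 < b).
Hypotheses (fermion : is_fermion_pair Psi Psis).
Hypotheses (sh : ICSH a b st m ms) (rbv : ICRBV a b st m ms).

Local Notation E := (edge_term m ms Psi Psis).

Lemma face_flux x y : faceS a b st x y ->
  E 1 (EH x y) - E 1 (EH x (y + 1)) =
  E 'i (face_vedge x y false) - E 'i (face_vedge x y true).
Proof.
move=> hxy.
have circulation_flux (A B F G : Mat R a b) : A + G = B + F -> A - B = F - G.
  by move=> e; rewrite -[A](addrK G) e addrAC [B + F]addrC addrK.
apply: circulation_flux; case: fermion => _ _ local_rel _ _.
have -> : EH x y = face_hedge x y false by rewrite /face_hedge addr0.
have -> : EH x (y + 1) = face_hedge x y true by [].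
apply: (face_balance (hedge := face_hedge x y) (vedge := face_vedge x y)) => dx dy;
  rewrite -(cfac_corner_factor _ x y).
- exact: sh hxy (inS_face_hedge _ hxy) (inS_face_vedge _ hxy).
- exact: local_rel (faceS_strip a_neg b_pos hxy).
Qed.

(* Plain [exact] below: the boundary relations of [is_fermion_pair] reach the
   scalars of the matrices through another canonical path, which [exact:]
   does not unfold. *)
Lemma left_wall_eq0 y : face_row st y -> E 'i (face_vedge (x_lo a st) y false) = 0.
Proof.
move/(left_bdry_face_vedge a_neg) => hz.
apply: (edge_term_eq0 (c := 'i)); first by rewrite conjCi sqrCi mulN1r.
- exact: rbv.1 _ hz.
- exact (fermion_left_bdry fermion hz).
Qed.

Lemma right_wall_eq0 x y : face_row st y -> x + 1 = x_hi b st ->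
  E 'i (face_vedge x y true) = 0.
Proof.
move=> hy /(right_bdry_face_vedge b_pos hy) hz.
apply: (edge_term_eq0 (c := - 'i)); first by rewrite conjCi sqrrN sqrCi mulN1r.
- by rewrite /m_at mulNr opprK; exact: rbv.2 _ hz.
- exact (fermion_right_bdry fermion hz).
Qed.

Lemma gamma_integral_step y : face_row st y ->
  contour_integral m ms Psi Psis (gamma a b st y) =
  contour_integral m ms Psi Psis (gamma a b st (y + 1)).
Proof.
move=> hy; rewrite !gammaE !contour_integral_hcontour.
have [n len] : exists n, `|x_hi b st - x_lo a st|%N = n.+1.
  by exists `|x_hi b st - x_lo a st|.-1%N; case: st hy => /=; lia.
pose x k := x_lo a st + k%:Z.
have face k : (k < n.+1)%N -> faceS a b st (x k) y.
  by rewrite faceSE hy andbT /x; case: st len {hy} => /= len; lia.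
apply/eqP; rewrite -subr_eq0 -sumrB len.
rewrite (eq_big_nat _ _ (F2 := fun k =>
  E 'i (face_vedge (x k) y false) - E 'i (face_vedge (x k) y true))); last first.
  by move=> k /andP[_ /face/face_flux].
rewrite telescope_sumr_adjacent => [|k kn]; last first.
  have next : x k.+1 = x k + 1 by rewrite /x; lia.
  have fk1 : faceS a b st (x k + 1) y by rewrite -next; apply: face.
  by rewrite next (face_vedge_shared (face k (ltnW kn)) fk1).
rewrite /x addr0 left_wall_eq0 // right_wall_eq0 // ?subr0 //.
by case: st len {hy face} => /= len; lia.
Qed.

End Circulation.

Theorem proposition3p20 (R : realType) (a b : int) (ha : a < 0) (hb : 0 < b)
    (Psi Psis : edge -> Mat R a b) :
  is_fermion_pair Psi Psis ->
  forall (st : star) (m ms : edge -> R[i]),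
    ICSH a b st m ms -> ICRBV a b st m ms ->
    forall y : int, y_range st y ->
      contour_integral m ms Psi Psis (gamma a b st y) =
      contour_integral m ms Psi Psis (gamma a b st 0).
Proof.
move=> fermion st m ms sh rbv y.
have step := gamma_integral_step ha hb fermion sh rbv.
case: st sh rbv step => sh rbv step /= hy.
- exact: eq_nonneg_from_step step y hy.
- exact: eq_nonpos_from_step step y hy.
- exact: eq_nonpos_from_step step y hy.
Qed.
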